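(* Let $N\ge2$, $d\ge1$, and let $\Sigma\subset\mathbb{Z}_N^d$ be a nonempty Salem set at level $\Lambda_{\text{Salem}}$ with $\mathrm{dens}(\Sigma)=N^{-d}|\Sigma|<1$. Then for every $f:\mathbb{Z}_N^d\to\mathbb{C}$ whose Fourier transform $\hat f$ is supported in $\Sigma$, $$\Big(\frac{1}{|\Sigma|}\sum_{m\in\Sigma}|\hat f(m)|^2\Big)^{1/2}\le \frac{N^{-d}\,|\Sigma|^{-1/4}\,\Lambda_{\text{Salem}}^{1/2}\sum_{x\in\mathbb{Z}_N^d}|f(x)|}{\sqrt{1-\mathrm{dens}(\Sigma)}}.$$
   Context: $\chi(t)=e^{2\pi i t/N}$, $\hat f(m)=N^{-d}\sum_{x}\chi(-x\cdot m)f(x)$. Sets are identified with indicator functions, so $\hat S(z)=N^{-d}\sum_{x\in S}\chi(-x\cdot z)$. A set $S\subset\mathbb{Z}_N^d$ is a Salem set at level $\Lambda_{\text{Salem}}$ if $|\hat S(z)|\le \Lambda_{\text{Salem}}N^{-d}|S|^{1/2}$ for all $z\ne0$. *)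

From HB Require Import structures.
From mathcomp Require Import all_boot all_order all_algebra.
From mathcomp Require Import complex.
From mathcomp Require Import all_classical all_reals.
From mathcomp Require Import trigo.
Set Implicit Arguments. Unset Strict Implicit. Unset Printing Implicit Defensive.
Import Order.TTheory GRing.Theory Num.Theory.
Local Open Scope ring_scope.
Local Open Scope complex_scope.

(* The group Z_N^d, represented as functions 'I_d -> 'Z_N (N >= 2 assumed in
   the theorem, so that 'Z_N is really Z/NZ). *)
Definition ZNd (N d : nat) := {ffun 'I_d -> 'Z_N}.

Definition dotZ (N d : nat) (x m : ZNd N d) : int :=
  (\sum_(i < d) ((nat_of_ord (x i) * nat_of_ord (m i))%N)%:Z)%R.

Definition chi (R : realType) (N : nat) (t : int) : R[i] :=
  (cos (2 * pi * t%:~R / N%:R) +i* sin (2 * pi * t%:~R / N%:R))%C.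

Definition fourier (R : realType) (N d : nat) (f : ZNd N d -> R[i]) (m : ZNd N d)
  : R[i] :=
  (N%:R ^- d) * \sum_(x : ZNd N d) chi R N (- dotZ x m) * f x.

Definition indic (R : realType) (N d : nat) (S : {set ZNd N d}) (x : ZNd N d) : R[i] :=
  if x \in S then 1 else 0.

Definition cmod (R : realType) (z : R[i]) : R :=
  Num.sqrt (complex.Re z ^+ 2 + complex.Im z ^+ 2).

Definition salem (R : realType) (N d : nat) (S : {set ZNd N d}) (Lambda : R) : Prop :=
  forall z : ZNd N d, z != 0 ->
    cmod (fourier (indic R S) z) <= Lambda * N%:R ^- d * Num.sqrt (#|S|%:R).

Definition dens (R : realType) (N d : nat) (S : {set ZNd N d}) : R :=
  N%:R ^- d * #|S|%:R.

(* Put A = sum_{m in Sigma} |f^(m)|^2.  As f^ vanishes off Sigma, A is also the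
   1_Sigma-weighted energy of f^, and expanding the squares gives
     A = N^-d sum_{x,y} f(x) conj(f(y)) Sigma^(x - y).
   The diagonal contributes N^-d Sigma^(0) sum_x |f(x)|^2 = dens(Sigma) A by Parseval;
   off the diagonal the Salem bound |Sigma^(z)| <= Lambda N^-d |Sigma|^(1/2) applies.
   Hence (1 - dens Sigma) A <= N^-2d Lambda |Sigma|^(1/2) (sum_x |f(x)|)^2, which
   rearranges to the claim. *)

From HB Require Import structures.
From mathcomp Require Import all_boot all_order all_algebra.
From mathcomp Require Import complex.
From mathcomp Require Import all_classical all_reals.
From mathcomp Require Import trigo.
From mathcomp Require Import ring lra.
Import Order.TTheory GRing.Theory Num.Theory.
Local Open Scope ring_scope.
Local Open Scope complex_scope.
Set Implicit Arguments. Unset Strict Implicit. Unset Printing Implicit Defensive.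

Section Chi.
Variables (R : realType) (N : nat).
Hypothesis N_ge2 : (2 <= N)%N.

Local Notation chi := (chi R N).

Lemma chi0 : chi 0 = 1.
Proof. by rewrite /chi mulr0 mul0r cos0 sin0. Qed.

Lemma chiD (a b : int) : chi (a + b) = chi a * chi b.
Proof.
rewrite /chi intrD mulrDr mulrDl cosD sinD; simpc.
by congr (_ +i* _)%C; rewrite addrC.
Qed.

Lemma chiN (a : int) : chi (- a) = (chi a)^*%C.
Proof. by rewrite /chi intrN mulrN mulNr cosN sinN. Qed.

Lemma chi_sum (I : finType) (t : I -> int) : chi (\sum_i t i) = \prod_i chi (t i).
Proof. exact: (big_morph _ chiD chi0). Qed.

Lemma chi_periodic (a : int) (n : nat) : chi (a + (N * n)%N%:Z) = chi a.
Proof.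
have N_neq0 : (N%:R : R) != 0 by rewrite pnatr_eq0 -lt0n (leq_trans _ N_ge2).
rewrite /chi; suff -> : 2 * pi * (a + (N * n)%N%:Z)%:~R / N%:R
                      = 2 * pi * a%:~R / N%:R + (pi *+ 2) *+ n :> R.
  by rewrite (periodicn (@cosD2pi R)) (periodicn (@sinD2pi R)).
rewrite intrD (_ : ((N * n)%N%:Z)%:~R = N%:R * n%:R); last by rewrite -natrM.
by rewrite -mulrnA -(mulr_natr pi) natrM; field.
Qed.

Lemma chi_neq1 (k : nat) : (0 < k < N)%N -> chi k%:Z != 1.
Proof.
move=> /andP[k_gt0 k_ltN].
have N_gt0 : (0 : R) < N%:R by rewrite ltr0n (leq_trans _ N_ge2).
set x : R := 2 * pi * (k%:Z)%:~R / N%:R.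
have x_gt0 : 0 < x by rewrite /x divr_gt0 // !mulr_gt0 ?pi_gt0 ?ltr0n.
have x_lt2pi : x < pi *+ 2.
  rewrite /x ltr_pdivrMr // -(mulr_natl pi 2) -[k%:Z%:~R]/(k%:R).
  by rewrite ltr_pM2l ?ltr_nat // mulr_gt0 ?pi_gt0.
rewrite /chi -/x; apply/negP => /eqP [] cos_x sin_x.
case: (ltgtP x pi) => [x_ltpi | pi_ltx | x_pi].
- by have := sin_gt0_pi (introT andP (conj x_gt0 x_ltpi)); rewrite sin_x ltxx.
- have : 0 < sin (x - pi).
    by apply: sin_gt0_pi; rewrite subr_gt0 pi_ltx ltrBlDr -mulr2n.
  by rewrite sinB sin_x cos_x sinpi cospi; lra.
- by move: cos_x; rewrite x_pi cospi => /eqP; lra.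
Qed.

End Chi.

Section CharactersZNd.
Variables (R : realType) (N d : nat).
Hypothesis N_ge2 : (2 <= N)%N.
Local Notation G := (ZNd N d).

Lemma chi_mulZpDl (a b : 'Z_N) (c : nat) :
  chi R N ((a + b)%R * c)%N%:Z = chi R N (a * c)%N%:Z * chi R N (b * c)%N%:Z.
Proof.
have -> : nat_of_ord (a + b)%R = ((a + b) %% N)%N
  by congr (_ %% _)%N; exact: Zp_cast.
rewrite -chiD -PoszD -mulnDl {2}(divn_eq (a + b) N).
by rewrite mulnDl PoszD (mulnC _ N) -mulnA addrC chi_periodic.
Qed.

Definition charZ (x m : G) : R[i] := chi R N (dotZ x m).

Lemma charZE x m : charZ x m = \prod_i chi R N (x i * m i)%N%:Z.
Proof. exact: chi_sum. Qed.

Lemma charZC x m : charZ x m = charZ m x.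
Proof. by rewrite !charZE; apply: eq_bigr => i _; rewrite mulnC. Qed.

Lemma charZDl x y m : charZ (x + y) m = charZ x m * charZ y m.
Proof.
by rewrite !charZE -big_split; apply: eq_bigr => i _; rewrite ffunE chi_mulZpDl.
Qed.

Lemma charZ0l m : charZ 0 m = 1.
Proof. by rewrite charZE big1 // => i _; rewrite ffunE mul0n chi0. Qed.

Lemma conjcharZ_mul x y m : (charZ x m)^*%C * charZ y m = (charZ (x - y) m)^*%C.
Proof.
have -> : charZ x m = charZ (x - y) m * charZ y m by rewrite -charZDl subrK.
rewrite rmorphM -mulrA.
have -> : (charZ y m)^*%C * charZ y m = 1 by rewrite /charZ -chiN -chiD addNr chi0.
by rewrite mulr1.
Qed.

Lemma card_ZNd : #|G| = (N ^ d)%N.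
Proof. by rewrite card_ffun !card_ord Zp_cast. Qed.

Lemma sum_charZ z : \sum_m charZ z m = if z == 0 then (N ^ d)%:R else 0.
Proof.
have [->|z_neq0] := eqVneq z 0.
  by rewrite (eq_bigr (fun _ => 1)) => [|m _]; rewrite ?charZ0l // sumr_const card_ZNd.
have [i zi_neq0] : exists i, z i != 0.
  apply/existsP; apply: contraR z_neq0 => /existsPn zi0.
  by apply/eqP/ffunP => i; rewrite ffunE; apply/eqP/negPn.
pose e : G := [ffun j => (j == i)%:R].
have charZ_e : charZ z e != 1.
  rewrite charZE (bigD1 i) //= big1 => [|j ji]; last first.
    by rewrite ffunE (negbTE ji) muln0 chi0.
  rewrite mulr1 ffunE eqxx /= modn_small // muln1; apply: chi_neq1 => //.
  rewrite lt0n -[N in (_ < N)%N](Zp_cast N_ge2) ltn_ord andbT.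
  by apply: contra zi_neq0 => /eqP zi0; apply/eqP/val_inj.
(* The sum is invariant under translating m by e, which multiplies it by charZ z e. *)
set S := \sum_m charZ z m.
have S_inv : S = S * charZ z e.
  rewrite {1}/S (reindex_inj (addIr e)) mulr_suml; apply: eq_bigr => m _.
  by rewrite charZC charZDl !(charZC z).
apply/eqP; move: charZ_e; apply: contraNT => S_neq0.
by rewrite -(inj_eq (mulfI S_neq0)) mulr1 -S_inv.
Qed.

End CharactersZNd.

Section Fourier.
Variables (R : realType) (N d : nat).
Hypothesis N_ge2 : (2 <= N)%N.
Local Notation G := (ZNd N d).
Local Notation c := ((N%:R : R[i]) ^- d).

Lemma fourierE (f : G -> R[i]) m : fourier f m = c * \sum_x (charZ R x m)^*%C * f x.
Proof. by congr (_ * _); apply: eq_bigr => x _; rewrite chiN. Qed.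

Lemma fourier_cst1 z : fourier (fun _ : G => 1 : R[i]) z = (z == 0)%:R.
Proof.
rewrite fourierE (eq_bigr (fun m => (charZ R z m)^*%C)) => [|m _]; last first.
  by rewrite mulr1 charZC.
rewrite -rmorph_sum sum_charZ //; case: eqP => _; last by rewrite rmorph0 mulr0.
have N_neq0 : (N%:R : R[i]) != 0 by rewrite pnatr_eq0 -lt0n (leq_trans _ N_ge2).
by rewrite rmorph_nat natrX mulVf // expf_neq0.
Qed.

Lemma conj_fourier (f : G -> R[i]) m :
  (fourier f m)^*%C = c * \sum_x charZ R x m * (f x)^*%C.
Proof.
rewrite fourierE rmorphM rmorph_sum; congr (_ * _).
  by rewrite fmorphV rmorphXn rmorph_nat.
by apply: eq_bigr => x _; rewrite rmorphM; congr (_ * _); apply: conjcK.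
Qed.

Lemma sum_weighted_sqr_fourier (f g : G -> R[i]) :
  \sum_m g m * `|fourier f m| ^+ 2 =
  c * \sum_x \sum_y f x * (f y)^*%C * fourier g (x - y).
Proof.
transitivity (\sum_m \sum_x \sum_y
    c * c * (g m * ((charZ R x m)^*%C * f x) * (charZ R y m * (f y)^*%C))).
  apply: eq_bigr => m _; rewrite sqr_normc conj_fourier fourierE.
  transitivity (c * c * g m * ((\sum_x (charZ R x m)^*%C * f x) *
                               (\sum_y charZ R y m * (f y)^*%C))); first by ring.
  rewrite big_distrlr /= mulr_sumr; apply: eq_bigr => x _.
  by rewrite mulr_sumr; apply: eq_bigr => y _; ring.
rewrite exchange_big mulr_sumr; apply: eq_bigr => x _.
rewrite exchange_big mulr_sumr; apply: eq_bigr => y _.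
rewrite fourierE !mulrA mulr_sumr; apply: eq_bigr => m _.
rewrite (charZC _ m) -(conjcharZ_mul _ N_ge2); ring.
Qed.

Lemma parseval (f : G -> R[i]) : \sum_m `|fourier f m| ^+ 2 = c * \sum_x `|f x| ^+ 2.
Proof.
have := sum_weighted_sqr_fourier f (fun _ => 1).
under eq_bigr do rewrite mul1r; move=> ->; congr (_ * _).
apply: eq_bigr => x _; rewrite (bigD1 x) //= subrr fourier_cst1 eqxx mulr1 sqr_normc.
rewrite big1 ?addr0 // => y y_neq_x.
by rewrite fourier_cst1 subr_eq0 eq_sym (negbTE y_neq_x) mulr0.
Qed.

Lemma fourier_indic0 (S : {set G}) : fourier (indic R S) 0 = c * #|S|%:R.
Proof.
rewrite fourierE; congr (_ * _).
rewrite (eq_bigr (indic R S)) => [|x _]; last by rewrite charZC charZ0l conjc1 mul1r.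
by rewrite /indic -big_mkcond sumr_const.
Qed.

End Fourier.

Lemma cmodE (R : realType) (z : R[i]) : (cmod z)%:C = `|z|.
Proof. by rewrite normc_def. Qed.

Section SalemEnergy.
Variables (R : realType) (N d : nat).
Hypothesis N_ge2 : (2 <= N)%N.
Local Notation G := (ZNd N d).
Local Notation c := ((N%:R : R[i]) ^- d).

Lemma salem_level_ge0 (S : {set G}) (Lambda : R) :
  (0 < d)%N -> S != finset.set0 -> salem S Lambda -> 0 <= Lambda.
Proof.
move=> d_gt0 S_neq0 S_salem.
pose e : G := [ffun _ => 1].
have e_neq0 : e != 0.
  apply/eqP => /ffunP /(_ (Ordinal d_gt0)); rewrite !ffunE => /eqP.
  by rewrite -val_eqE /= modn_small.
have := le_trans (sqrtr_ge0 _) (S_salem e e_neq0).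
rewrite pmulr_lge0 ?sqrtr_gt0 ?ltr0n ?card_gt0 // pmulr_lge0 //.
by rewrite invr_gt0 exprn_gt0 // ltr0n (leq_trans _ N_ge2).
Qed.

Lemma norm_sum_offdiag_le (f h : G -> R[i]) (K : R) : 0 <= K ->
  (forall z, z != 0 -> `|h z| <= K%:C) ->
  `|\sum_x \sum_(y | y != x) f x * (f y)^*%C * h (x - y)|
    <= K%:C * (\sum_x `|f x|) ^+ 2.
Proof.
move=> K_ge0 h_le.
rewrite expr2 mulr_suml mulr_sumr; apply: le_trans (ler_norm_sum _ _ _) _.
apply: ler_sum => x _; rewrite mulrA mulr_sumr.
apply: le_trans (ler_norm_sum _ _ _) _.
rewrite [X in _ <= X](bigD1 x) //=; apply: ler_wpDl; first by rewrite !mulr_ge0 // ler0c.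
apply: ler_sum => y y_neq_x; rewrite !normrM normcJ -[K%:C * _ * _]mulrA [K%:C * _]mulrC.
by rewrite ler_wpM2l ?mulr_ge0 // h_le // subr_eq0 eq_sym.
Qed.

Lemma sum_sqr_fourier_offdiag (S : {set G}) (f : G -> R[i]) :
  (forall m, m \notin S -> fourier f m = 0) ->
  (1 - (dens R S)%:C) * \sum_m `|fourier f m| ^+ 2
    = c * \sum_x \sum_(y | y != x) f x * (f y)^*%C * fourier (indic R S) (x - y).
Proof.
move=> f_supp.
set P := \sum_m `|fourier f m| ^+ 2.
set Off := \sum_x \sum_(y | y != x) _.
have P_weighted : P = c * \sum_x \sum_y f x * (f y)^*%C * fourier (indic R S) (x - y).
  rewrite -sum_weighted_sqr_fourier //; apply: eq_bigr => m _.
  rewrite /indic; case: ifPn => [_|m_notin]; first by rewrite mul1r.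
  by rewrite f_supp // normr0 expr0n mul0r.
have diag x : f x * (f x)^*%C * fourier (indic R S) (x - x) = (dens R S)%:C * `|f x| ^+ 2.
  rewrite subrr fourier_indic0 // sqr_normc /dens rmorphM fmorphV rmorphXn !rmorph_nat.
  by rewrite mulrC.
have P_split : P = (dens R S)%:C * P + c * Off.
  rewrite {1}P_weighted (eq_bigr (fun x => (dens R S)%:C * `|f x| ^+ 2 +
    \sum_(y | y != x) f x * (f y)^*%C * fourier (indic R S) (x - y))) => [|x _].
    by rewrite big_split /= mulrDr -mulr_sumr mulrCA -parseval.
  by rewrite (bigD1 x) //= diag.
by rewrite mulrBl mul1r {1}P_split addrAC subrr add0r.
Qed.

Lemma salem_energy_bound (S : {set G}) (Lambda : R) (f : G -> R[i]) :
  (0 < d)%N -> S != finset.set0 -> salem S Lambda ->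
  (forall m, m \notin S -> fourier f m = 0) ->
  (1 - dens R S) * \sum_(m in S) cmod (fourier f m) ^+ 2
    <= N%:R ^- d * (Lambda * N%:R ^- d * Num.sqrt #|S|%:R) * (\sum_x cmod (f x)) ^+ 2.
Proof.
move=> d_gt0 S_neq0 S_salem f_supp.
have N_gt0 : (0 : R) < N%:R by rewrite ltr0n (leq_trans _ N_ge2).
have c_ge0 : (0 : R) <= N%:R ^- d by rewrite invr_ge0 exprn_ge0 // ltW.
have cE : (N%:R ^- d : R)%:C = c by rewrite fmorphV rmorphXn rmorph_nat.
set K := Lambda * _ * _.
have K_ge0 : 0 <= K.
  by rewrite !mulr_ge0 ?sqrtr_ge0 // (salem_level_ge0 d_gt0 S_neq0 S_salem).
rewrite -lecR; set L := (1 - dens R S) * _.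
have LE : L%:C = c * \sum_x \sum_(y | y != x) f x * (f y)^*%C * fourier (indic R S) (x - y).
  rewrite -sum_sqr_fourier_offdiag // rmorphM rmorphB rmorph1 rmorph_sum.
  congr (_ * _); rewrite big_mkcond; apply: eq_bigr => m _ /=.
  case: ifPn => [_|m_notin]; first by rewrite rmorphXn -cmodE.
  by rewrite f_supp // sqr_normc mul0r.
apply: le_trans (real_ler_norm _) _; first by apply/complex_realP; exists L.
have RE : (N%:R ^- d * K * (\sum_x cmod (f x)) ^+ 2)%:C
          = c * (K%:C * (\sum_x `|f x|) ^+ 2).
  rewrite -mulrA rmorphM; congr (_ * _); first exact: cE.
  rewrite rmorphM rmorphXn rmorph_sum; congr (_ * _ ^+ 2).
  by apply: eq_bigr => x _; exact: cmodE.
rewrite LE RE normrM ger0_norm -?cE ?ler0c // ler_wpM2l -?cE ?ler0c //.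
apply: norm_sum_offdiag_le K_ge0 _ => z z_neq0; rewrite -cmodE lecR.
exact: S_salem.
Qed.

End SalemEnergy.

Lemma sqrt_mean_le_of_energy_bound (R : rcfType) (s A c L F D : R) :
  0 < s -> 0 <= c -> 0 <= L -> 0 <= F -> 0 < D ->
  D * A <= c * (L * c * Num.sqrt s) * F ^+ 2 ->
  Num.sqrt (s^-1 * A) <= c * (Num.sqrt (Num.sqrt s))^-1 * Num.sqrt L * F / Num.sqrt D.
Proof.
move=> s_gt0 c_ge0 L_ge0 F_ge0 D_gt0 energy_le.
set q := Num.sqrt (Num.sqrt s); set l := Num.sqrt L; set r := Num.sqrt D.
have q_gt0 : 0 < q by rewrite !sqrtr_gt0.
have r_gt0 : 0 < r by rewrite sqrtr_gt0.
have sqrt_sE : Num.sqrt s = q ^+ 2 by rewrite sqr_sqrtr // sqrtr_ge0.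
have sE : s = q ^+ 4 by rewrite -(sqr_sqrtr (ltW s_gt0)) sqrt_sE -exprM.
have LE : L = l ^+ 2 by rewrite sqr_sqrtr.
have DE : D = r ^+ 2 by rewrite sqr_sqrtr // ltW.
have rhs_ge0 : 0 <= c * q^-1 * l * F / r by rewrite !mulr_ge0 ?invr_ge0 ?sqrtr_ge0 // ltW.
rewrite -(ger0_norm rhs_ge0) -sqrtr_sqr ler_sqrt ?sqr_ge0 //.
have -> : (c * q^-1 * l * F / r) ^+ 2
          = (q ^+ 4)^-1 * (c * (l ^+ 2 * c * q ^+ 2) * F ^+ 2 / r ^+ 2).
  by field; rewrite ?gt_eqF.
rewrite sE ler_pM2l ?invr_gt0 ?exprn_gt0 // ler_pdivlMr ?exprn_gt0 // mulrC.
by rewrite -DE -LE -sqrt_sE.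
Qed.

Unset Implicit Arguments.

Theorem mainTheorem4 (R : realType) (N d : nat) (hN : (2 <= N)%N) (hd : (1 <= d)%N)
  (Sigma : {set ZNd N d}) (Lambda : R)
  (hne : Sigma != finset.set0) (hsalem : salem Sigma Lambda) (hdens : dens R Sigma < 1)
  (f : ZNd N d -> R[i])
  (hsupp : forall m : ZNd N d, m \notin Sigma -> fourier f m = 0) :
  Num.sqrt ((#|Sigma|%:R)^-1 * \sum_(m in Sigma) cmod (fourier f m) ^+ 2)
  <= (N%:R ^- d * (Num.sqrt (Num.sqrt (#|Sigma|%:R)))^-1 * Num.sqrt Lambda
      * \sum_(x : ZNd N d) cmod (f x))
     / Num.sqrt (1 - dens R Sigma).
Proof.
apply: sqrt_mean_le_of_energy_bound.
- by rewrite ltr0n card_gt0.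
- by rewrite invr_ge0 exprn_ge0 // ler0n.
- exact: (salem_level_ge0 hN hd hne hsalem).
- by apply: sumr_ge0 => x _; apply: sqrtr_ge0.
- by rewrite subr_gt0.
- exact: salem_energy_bound.
Qed.
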